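(* Let $\sigma=(V,\mathrm{atime},\mathrm{pos})$ be an instance of $k$-MPMD on an $H$-metric space $(\chi,d_H)$ with parameter $\gamma$. For every $k$-element set $F=\{v_1,\ldots,v_k\}\subseteq V$, letting $v\in F$ be a request with $\mathrm{atime}(v)=\max_{u\in F}\mathrm{atime}(u)$, $$\frac{1}{\gamma k^2}\sum_{i=1}^{k-1}\sum_{j=i+1}^{k}\mathrm{opt\text{-}cost}(v_i,v_j)\;\le\;\mathrm{opt\text{-}cost}(F)\;\le\;\sum_{i=1}^{k}\mathrm{opt\text{-}cost}(v,v_i),$$ where $\mathrm{opt\text{-}cost}(v,v):=0$.
   Context: $k\ge2$. An $H$-metric with parameter $\gamma$ (integer, $1\le\gamma\le k-1$) is a map $d_H:\chi^k\to[0,\infty)$ that is invariant under permutation of its arguments, is zero iff all arguments are equal, satisfies $d_H(p_1,\ldots,p_k)\le d_H(p_1,\ldots,p_i,a,\ldots,a)+d_H(a,\ldots,a,p_{i+1},\ldots,p_k)$ for all $p_j,a\in\chi$ and $i\in\{1,\dots,k\}$ (with $k-i$, resp. $i$, copies of $a$), and satisfies: $d_H(p)\le d_H(p')$ whenever the set of distinct entries of $p$ is a proper subset of that of $p'$, and $d_H(p)\le\gamma d_H(p')$ whenever these sets are equal. An instance of $k$-MPMD is $\sigma=(V,\mathrm{atime},\mathrm{pos})$ with $V=\{u_1,\ldots,u_m\}$ a set of requests ($m$ a multiple of $k$), arrival times $\mathrm{atime}:V\to\mathbb R_{\ge0}$ with $\mathrm{atime}(u_1)\le\cdots\le\mathrm{atime}(u_m)$,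 and positions $\mathrm{pos}:V\to\chi$. For a $k$-element $F=\{v_1,\ldots,v_k\}\subseteq V$, $\mathrm{opt\text{-}cost}(F):=d_H(\mathrm{pos}(v_1),\ldots,\mathrm{pos}(v_k))+\sum_{i=1}^k\big(\max_j\mathrm{atime}(v_j)-\mathrm{atime}(v_i)\big)$. The metric $d$ on $\chi$ is $d(p,q):=d_H(p,q,\ldots,q)+d_H(q,p,\ldots,p)$ (first argument once, second $k-1$ times). For distinct requests $u,w$, $\mathrm{opt\text{-}cost}(u,w):=d(\mathrm{pos}(u),\mathrm{pos}(w))+|\mathrm{atime}(u)-\mathrm{atime}(w)|$. *)

From HB Require Import structures.
From mathcomp Require Import all_boot all_order all_algebra all_fingroup.
Set Implicit Arguments. Unset Strict Implicit. Unset Printing Implicit Defensive.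
Import Order.TTheory GRing.Theory Num.Theory.
Local Open Scope ring_scope.

Definition entries_sub (chi : Type) (k : nat) (p p' : {ffun 'I_k -> chi}) : Prop :=
  forall i, exists j, p i = p' j.

Definition entries_proper (chi : Type) (k : nat) (p p' : {ffun 'I_k -> chi}) : Prop :=
  entries_sub p p' /\ ~ entries_sub p' p.

Definition entries_eq (chi : Type) (k : nat) (p p' : {ffun 'I_k -> chi}) : Prop :=
  entries_sub p p' /\ entries_sub p' p.

Definition pref_then (chi : Type) (k : nat) (p : {ffun 'I_k -> chi}) (i : nat) (a : chi)
  : {ffun 'I_k -> chi} := [ffun j : 'I_k => if (j < i)%N then p j else a].
Definition const_then (chi : Type) (k : nat) (p : {ffun 'I_k -> chi}) (i : nat) (a : chi)
  : {ffun 'I_k -> chi} := [ffun j : 'I_k => if (j < i)%N then a else p j].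

Definition is_Hmetric (R : realFieldType) (chi : Type) (k gamma : nat)
  (dH : {ffun 'I_k -> chi} -> R) : Prop :=
  (forall p, 0 <= dH p) /\
  (forall (s : 'S_k) (p : {ffun 'I_k -> chi}), dH [ffun j => p (s j)] = dH p) /\
  (forall p, dH p = 0 <-> forall i j, p i = p j) /\
      (forall p a (i : nat), (1 <= i <= k)%N ->
          dH p <= dH (pref_then p i a) + dH (const_then p i a)) /\
  (forall p p', entries_proper p p' -> dH p <= dH p') /\
  (forall p p', entries_eq p p' -> dH p <= gamma%:R * dH p').

Definition one_then (chi : Type) (k : nat) (p q : chi) : {ffun 'I_k -> chi} :=
  [ffun j : 'I_k => if (j == 0 :> nat) then p else q].

Definition dist (R : realFieldType) (chi : Type) (k : nat)
  (dH : {ffun 'I_k -> chi} -> R) (p q : chi) : R :=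
  dH (one_then k p q) + dH (one_then k q p).

Definition is_instance (R : realFieldType) (chi : Type) (k m : nat)
  (atime : 'I_m -> R) (pos : 'I_m -> chi) : Prop :=
  (k %| m)%N /\ (forall u, 0 <= atime u) /\
  (forall u w : 'I_m, (u <= w)%N -> atime u <= atime w).

(* opt-cost(F) for F = {v_1,...,v_k} given by an injective v : 'I_k -> 'I_m *)
Definition opt_cost_set (R : realFieldType) (chi : Type) (k m : nat)
  (dH : {ffun 'I_k -> chi} -> R) (atime : 'I_m -> R) (pos : 'I_m -> chi)
  (v : 'I_k -> 'I_m) : R :=
  dH [ffun i => pos (v i)] +
  \sum_(i < k) (\big[Num.max/atime (v i)]_(j < k) atime (v j) - atime (v i)).

Definition opt_cost_pair (R : realFieldType) (chi : Type) (k m : nat)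
  (dH : {ffun 'I_k -> chi} -> R) (atime : 'I_m -> R) (pos : 'I_m -> chi)
  (u w : 'I_m) : R :=
  if u == w then 0 else dist dH (pos u) (pos w) + `|atime u - atime w|.

From HB Require Import structures.
From mathcomp Require Import all_boot all_order all_algebra all_fingroup.
From mathcomp Require Import lra.
From Stdlib Require Import Classical.
Import Order.TTheory GRing.Theory Num.Theory.
Local Open Scope ring_scope.

(* Upper bound: overwriting the entries of p = pos(F) one at a time by the
   position a = pos v of the latest request, the triangle inequality gives
   dH p <= sum_t dH (p_t, a, ..., a) <= sum_t d(a, p_t), while every waiting
   time max atime - atime v_i is at most |atime v - atime v_i|.
   Lower bound: the pair (p_i, p_j, ..., p_j) has its entries among those of p,
   so d(p_i, p_j) <= 2 gamma dH p, and the waiting times of v_i and v_j are both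
   counted in opt-cost(F); there are at most k^2 / 2 pairs. *)

Section HMetric.
Context {R : realFieldType} {chi : Type} {k gamma : nat}
  {dH : {ffun 'I_k -> chi} -> R}.
Hypothesis dH_Hmetric : @is_Hmetric R chi k gamma dH.

Definition overwrite_prefix (p : {ffun 'I_k -> chi}) (a : chi) (n : nat) :
  {ffun 'I_k -> chi} := [ffun j : 'I_k => if (j < n)%N then a else p j].

Definition keep_entry (p : {ffun 'I_k -> chi}) (a : chi) (t : 'I_k) :
  {ffun 'I_k -> chi} := [ffun j => if j == t then p t else a].

Lemma Hmetric_ge0 p : 0 <= dH p.
Proof. by case: dH_Hmetric. Qed.

Lemma Hmetric_const (p : {ffun 'I_k -> chi}) : (forall i j, p i = p j) -> dH p = 0.
Proof. by case: dH_Hmetric => _ [_ [dH0 _]] /dH0. Qed.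

Lemma Hmetric_overwrite_step p a n (n_lt_k : (n < k)%N) :
  dH (overwrite_prefix p a n)
    <= dH (keep_entry p a (Ordinal n_lt_k)) + dH (overwrite_prefix p a n.+1).
Proof.
case: dH_Hmetric => _ [_ [_ [dH_tri _]]].
have := dH_tri (overwrite_prefix p a n) a n.+1; rewrite n_lt_k => /(_ isT).
have -> : pref_then (overwrite_prefix p a n) n.+1 a = keep_entry p a (Ordinal n_lt_k).
  apply/ffunP => j; rewrite !ffunE ltnS leq_eqVlt -val_eqE /=.
  by case: (ltngtP j n) => // j_n; congr (p _); apply: val_inj.
have -> // : const_then (overwrite_prefix p a n) n.+1 a = overwrite_prefix p a n.+1.
apply/ffunP => j; rewrite !ffunE ltnS.
by case: (ltngtP j n) => // ->; rewrite ltnn.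
Qed.

Lemma Hmetric_le_sum_prefix p a n : (n <= k)%N ->
  dH p <= \sum_(t < k | (t < n)%N) dH (keep_entry p a t)
          + dH (overwrite_prefix p a n).
Proof.
elim: n => [_|n IH n_lt_k].
  have -> : overwrite_prefix p a 0 = p by apply/ffunP => j; rewrite ffunE.
  by rewrite big_pred0 ?add0r.
apply: (le_trans (IH (ltnW n_lt_k))).
rewrite [X in _ <= X + _](bigD1 (Ordinal n_lt_k)) //=.
have -> : \sum_(t < k | (t < n.+1)%N && (t != Ordinal n_lt_k)) dH (keep_entry p a t)
    = \sum_(t < k | (t < n)%N) dH (keep_entry p a t).
  by apply: eq_bigl => t; rewrite ltnS leq_eqVlt -val_eqE /=; case: ltngtP.
by rewrite [X in _ <= X + _]addrC -addrA lerD2l Hmetric_overwrite_step.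
Qed.

Lemma Hmetric_le_sum_keep_entry p a : dH p <= \sum_(t < k) dH (keep_entry p a t).
Proof.
have := Hmetric_le_sum_prefix p a k (leqnn k).
rewrite (@Hmetric_const (overwrite_prefix p a k)); last first.
  by move=> i j; rewrite !ffunE !ltn_ord.
by rewrite addr0; under eq_bigl do rewrite ltn_ord.
Qed.

Lemma Hmetric_keep_entry p a t : dH (keep_entry p a t) = dH (one_then k (p t) a).
Proof.
case: dH_Hmetric => _ [dH_perm _].
have k_gt0 : (0 < k)%N by apply: leq_ltn_trans (ltn_ord t).
rewrite -(dH_perm (tperm (Ordinal k_gt0) t)); congr dH; apply/ffunP => j.
rewrite !ffunE -[X in _ == X](tpermL (Ordinal k_gt0) t) (inj_eq perm_inj).
by rewrite -val_eqE.
Qed.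

Lemma dist_xx x : dist dH x x = 0.
Proof. by rewrite /dist Hmetric_const ?addr0 // => i j; rewrite !ffunE !if_same. Qed.

Lemma Hmetric_le_sum_dist p a : dH p <= \sum_(t < k) dist dH a (p t).
Proof.
apply: (le_trans (Hmetric_le_sum_keep_entry p a)); apply: ler_sum => t _.
by rewrite Hmetric_keep_entry /dist lerDr Hmetric_ge0.
Qed.

Lemma Hmetric_one_then_le (p : {ffun 'I_k -> chi}) i j : (1 <= gamma)%N ->
  dH (one_then k (p i) (p j)) <= gamma%:R * dH p.
Proof.
case: dH_Hmetric => _ [_ [_ [_ [dH_proper dH_eq]]]] gamma_ge1.
have sub_p : entries_sub (one_then k (p i) (p j)) p.
  by move=> t; rewrite ffunE; case: ifP => _; [exists i | exists j].
have [p_sub | p_nsub] := classic (entries_sub p (one_then k (p i) (p j))).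
  by apply: dH_eq; split.
apply: (le_trans (dH_proper _ _ (conj sub_p p_nsub))).
by rewrite ler_peMl ?Hmetric_ge0 ?ler1n.
Qed.

Lemma dist_entries_le (p : {ffun 'I_k -> chi}) i j : (1 <= gamma)%N ->
  dist dH (p i) (p j) <= gamma%:R * dH p *+ 2.
Proof. by move=> gamma_ge1; rewrite mulr2n lerD ?Hmetric_one_then_le. Qed.

End HMetric.

Lemma sum_pairs_const_le {R : numDomainType} n (c : R) : 0 <= c ->
  (\sum_(i < n) \sum_(j < n | (i < j)%N) c) *+ 2 <= c *+ (n * n).
Proof.
move=> c_ge0; set Z := \sum_(i < n) _.
have Z_lt : Z = \sum_(i < n) \sum_(j < n) (if (i < j)%N then c else 0).
  by apply: eq_bigr => i _; rewrite big_mkcond.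
have Z_gt : Z = \sum_(i < n) \sum_(j < n) (if (j < i)%N then c else 0).
  by rewrite Z_lt exchange_big.
have -> : c *+ (n * n) = \sum_(i < n) \sum_(j < n) c.
  by rewrite !sumr_const card_ord mulrnA.
rewrite mulr2n {1}Z_lt Z_gt -big_split; apply: ler_sum => i _.
rewrite -big_split /=; apply: ler_sum => j _.
by case: (ltngtP i j); rewrite ?addr0 ?add0r.
Qed.

Section Instance.
Context {R : realFieldType} {chi : Type} {k gamma m : nat}
  {dH : {ffun 'I_k -> chi} -> R} {atime : 'I_m -> R} {pos : 'I_m -> chi}
  {v : 'I_k -> 'I_m} {l : 'I_k}.
Hypothesis dH_Hmetric : @is_Hmetric R chi k gamma dH.
Hypothesis v_l_latest : forall j : 'I_k, atime (v j) <= atime (v l).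

Lemma opt_cost_pair_dist u w :
  opt_cost_pair dH atime pos u w = dist dH (pos u) (pos w) + `|atime u - atime w|.
Proof.
by rewrite /opt_cost_pair; case: eqP => // ->;
  rewrite (dist_xx dH_Hmetric) subrr normr0 addr0.
Qed.

Let p : {ffun 'I_k -> chi} := [ffun i => pos (v i)].
Let wait (i : 'I_k) : R := atime (v l) - atime (v i).

Lemma wait_ge0 i : 0 <= wait i.
Proof. by rewrite subr_ge0. Qed.

Lemma opt_cost_set_latest : opt_cost_set dH atime pos v = dH p + \sum_(i < k) wait i.
Proof.
congr (_ + _); apply: eq_bigr => i _; congr (_ - _).
by apply/eqP; rewrite eq_le bigmax_le //= le_bigmax.
Qed.

Lemma opt_cost_set_le_star :
  opt_cost_set dH atime pos v <= \sum_(i < k) opt_cost_pair dH atime pos (v l) (v i).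
Proof.
under [X in _ <= X]eq_bigr do rewrite opt_cost_pair_dist.
rewrite opt_cost_set_latest [X in _ <= X]big_split /=; apply: lerD.
  apply: le_trans (Hmetric_le_sum_dist dH_Hmetric p (pos (v l))) _.
  by apply: ler_sum => i _; rewrite ffunE.
by apply: ler_sum => i _; apply: ler_norm.
Qed.

Lemma opt_cost_pair_le i j : (1 <= gamma)%N -> i != j ->
  opt_cost_pair dH atime pos (v i) (v j)
    <= gamma%:R * (dH p + \sum_(t < k) wait t) *+ 2.
Proof.
move=> gamma_ge1 i_neq_j.
rewrite opt_cost_pair_dist mulrDr mulrnDl; apply: lerD.
  by have := dist_entries_le dH_Hmetric p i j gamma_ge1; rewrite !ffunE.
have waits_ge0 : 0 <= \sum_(t < k) wait t by apply: sumr_ge0 => t _; apply: wait_ge0.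
have norm_le : `|atime (v i) - atime (v j)| <= wait i + wait j.
  have := v_l_latest i; have := v_l_latest j.
  by rewrite /wait ler_norml => *; apply/andP; split; lra.
have waits_le : wait i + wait j <= \sum_(t < k) wait t.
  rewrite (bigD1 i) //= (bigD1 j) 1?eq_sym //= addrA lerDl.
  by apply: sumr_ge0 => t _; apply: wait_ge0.
apply: le_trans norm_le (le_trans waits_le _).
by rewrite mulr2n ler_wpDl ?mulr_ge0 ?ler_peMl ?ler1n.
Qed.

Lemma opt_cost_pairs_le : (0 < k)%N -> (1 <= gamma)%N ->
  ((gamma * k ^ 2)%:R)^-1 *
      (\sum_(i < k) \sum_(j < k | (i < j)%N) opt_cost_pair dH atime pos (v i) (v j))
    <= opt_cost_set dH atime pos v.
Proof.
move=> k_gt0 gamma_ge1; rewrite opt_cost_set_latest.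
set c := gamma%:R * (dH p + \sum_(t < k) wait t).
have c_ge0 : 0 <= c.
  rewrite mulr_ge0 ?addr_ge0 ?(Hmetric_ge0 dH_Hmetric) //.
  by apply: sumr_ge0 => t _; apply: wait_ge0.
have pairs_le : \sum_(i < k) \sum_(j < k | (i < j)%N)
    opt_cost_pair dH atime pos (v i) (v j)
      <= (\sum_(i < k) \sum_(j < k | (i < j)%N) c) *+ 2.
  rewrite -sumrMnl; apply: ler_sum => i _; rewrite -sumrMnl.
  by apply: ler_sum => j i_lt_j; apply: opt_cost_pair_le; rewrite // neq_ltn i_lt_j.
rewrite ler_pdivrMl ?ltr0n ?muln_gt0 ?expn_gt0 ?k_gt0 ?gamma_ge1 //.
apply: (le_trans pairs_le); apply: (le_trans (sum_pairs_const_le k c c_ge0)).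
by rewrite -[c *+ _]mulr_natl /c mulrA -natrM mulnn mulnC.
Qed.

End Instance.

Theorem lemma1 (R : realFieldType) (chi : Type) (k gamma m : nat)
  (dH : {ffun 'I_k -> chi} -> R) (atime : 'I_m -> R) (pos : 'I_m -> chi)
  (v : 'I_k -> 'I_m) (l : 'I_k) :
  (2 <= k)%N -> (1 <= gamma <= k.-1)%N ->
  @is_Hmetric R chi k gamma dH ->
  @is_instance R chi k m atime pos ->
  injective v ->
  (forall j : 'I_k, atime (v j) <= atime (v l)) ->
  ((gamma * k ^ 2)%:R)^-1 *
      (\sum_(i < k) \sum_(j < k | (i < j)%N) opt_cost_pair dH atime pos (v i) (v j))
    <= opt_cost_set dH atime pos v
  /\ opt_cost_set dH atime pos v <= \sum_(i < k) opt_cost_pair dH atime pos (v l) (v i).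
Proof.
move=> k_ge2 /andP[gamma_ge1 _] dH_Hmetric _ _ v_l_latest.
split; first exact: opt_cost_pairs_le dH_Hmetric v_l_latest (ltnW k_ge2) gamma_ge1.
exact: opt_cost_set_le_star dH_Hmetric v_l_latest.
Qed.
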